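(* For all integers $n\ge0$ and $j$ with $0\le 2j\le n$, $$f(n,j)=\sum_{i=0}^{j}p(i)\,p(j-i,\,n-2j).$$ Equivalently, the set of partitions $\lambda$ of $n$ with $a_2+a_4+\dots=j$ is in bijection with the set of ordered pairs of partitions $(\alpha,\beta)$ with $|\alpha|+|\beta|=j$ and $\beta$ having at most $n-2j$ parts; such a bijection is given by $\lambda=(a_1,\dots,a_r)\mapsto(\alpha,\beta)$ with $\alpha=(1^{a_2-a_3}2^{a_4-a_5}3^{a_6-a_7}\cdots)$ and $\beta=(1^{a_3-a_4}2^{a_5-a_6}3^{a_7-a_8}\cdots)$, where $a_i=0$ for $i>r$ and $k^{e}$ denotes $e$ copies of the part $k$.
   Context: A partition $\lambda$ of $n$ is written $n=a_1+\dots+a_r$ with $a_1\ge\dots\ge a_r\ge1$. $f(n,j)$ denotes the number of partitions of $n$ with $a_2+a_4+a_6+\dots=j$. $p(i)$ is the number of partitions of $i$ ($p(0)=1$), and $p(N,k)$ is the number of partitions of $N$ into at most $k$ parts ($p(0,k)=1$ for $k\ge0$). *)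

From mathcomp Require Import all_boot.
Set Implicit Arguments. Unset Strict Implicit. Unset Printing Implicit Defensive.

(* A partition is a seq nat a_1 >= a_2 >= ... >= a_r >= 1 (a_1 first). *)
Definition is_partition (n : nat) (s : seq nat) : bool :=
  [&& sorted geq s, all (fun a => 0 < a) s & sumn s == n].

Fixpoint seqs_len (m k : nat) : seq (seq nat) :=
  match k with
  | 0 => [:: [::]]
  | k'.+1 => [seq a :: t | a <- iota 1 m, t <- seqs_len m k']
  end.

(* Candidate sequences: lengths 0..n, entries in 1..n (contains every partition of n). *)
Definition candidates (n : nat) : seq (seq nat) :=
  flatten [seq seqs_len n k | k <- iota 0 n.+1].

Definition partitions (n : nat) : seq (seq nat) :=
  filter (is_partition n) (candidates n).

(* a_2 + a_4 + a_6 + ... (1-based even positions = 0-based odd positions) *)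
Fixpoint evsum (s : seq nat) : nat :=
  match s with
  | _ :: b :: t => b + evsum t
  | _ => 0
  end.

Definition p (i : nat) : nat := size (partitions i).

Definition pk (N k : nat) : nat := count (fun s => size s <= k) (partitions N).

Definition f (n j : nat) : nat := count (fun s => evsum s == j) (partitions n).

(* Number the parts of a partition l from 1 and let g_i = a_i - a_(i+1) + a_(i+2) - ... be its
   alternating tails (g_i is [alt_tail l (i - 1)]).  Then g_i + g_(i+1) = a_i and g_(i+2) <= g_i, so
   g_2 >= g_4 >= ... and g_3 >= g_5 >= ... are partitions: the conjugates of alpha and beta in the
   statement.  Summing a_i = g_i + g_(i+1) gives n = g_1 + 2 (g_2 + g_3 + ...) and
   a_2 + a_4 + ... = g_2 + g_3 + ..., so the pair has total size j, g_1 = n - 2j, and g_3 <= g_1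
   bounds the largest part of the second partition by n - 2j.  Conversely, a pair is interleaved
   after n - 2j and neighbouring terms are added; this inverts the map because g is determined by
   its neighbour sums and finite support.  Conjugation turns "largest part at most n - 2j" into
   "at most n - 2j parts". *)

From mathcomp Require Import all_boot zify.
Set Implicit Arguments. Unset Strict Implicit. Unset Printing Implicit Defensive.

Lemma sum_nat_lt (x N : nat) : \sum_(0 <= t < N) (t < x) = minn x N.
Proof.
elim: N => [|N IH]; first by rewrite big_geq // minn0.
by rewrite big_nat_recr //= IH; case: (ltnP N x) => ?; lia.
Qed.

Lemma sum_nat_double (F : nat -> nat) M :
  \sum_(0 <= i < M.*2) F i = \sum_(0 <= t < M) (F t.*2 + F t.*2.+1).
Proof.
elim: M => [|M IH]; first by rewrite !big_geq.
by rewrite doubleS !big_nat_recr //= IH addnA.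
Qed.

Lemma sum_nat_vanishing (F : nat -> nat) K N : K <= N ->
  (forall i, K <= i -> F i = 0) -> \sum_(0 <= i < N) F i = \sum_(0 <= i < K) F i.
Proof.
move=> le_KN F0; rewrite (big_cat_nat (leq0n K) le_KN) /=.
rewrite -[RHS]addn0; congr (_ + _).
by rewrite big_nat_cond big1 // => i /andP [/andP [/F0]].
Qed.

Lemma sum_nat_adjacent (G : nat -> nat) N : G N = 0 ->
  \sum_(0 <= i < N) (G i + G i.+1) = G 0 + 2 * \sum_(0 <= i < N) G i.+1.
Proof.
move=> GN0; rewrite big_split /=.
have := @big_nat_recl nat 0 addn N 0 G (leq0n N).
rewrite big_nat_recr //= GN0 addn0 => ->.
lia.
Qed.

Lemma sumn_nth (s : seq nat) N : size s <= N -> sumn s = \sum_(0 <= i < N) nth 0 s i.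
Proof.
move=> le_sN; rewrite sumnE (big_nth 0) (sum_nat_vanishing le_sN) // => i.
exact: nth_default.
Qed.

Lemma evsum_nth (s : seq nat) M : size s <= M.*2 ->
  evsum s = \sum_(0 <= t < M) nth 0 s t.*2.+1.
Proof.
elim: M s => [|M IH] [|x [|y s]] //= le_sM; try by rewrite big1 // => t _; rewrite nth_nil.
rewrite big_nat_recl // (IH s); last by rewrite doubleS in le_sM.
by congr (_ + _); apply: eq_bigr => t _; rewrite doubleS.
Qed.

Definition nonincreasing (F : nat -> nat) := forall i, F i.+1 <= F i.

Lemma nonincreasing_le F : nonincreasing F -> {homo F : i k /~ i <= k}.
Proof.
move=> F_dec i k le_ik.
exact: (@homo_leq _ F (fun a b => b <= a) leqnn (fun _ _ _ ba cb => leq_trans cb ba) F_dec).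
Qed.

Lemma sorted_nonincreasing (s : seq nat) : sorted geq s -> nonincreasing (nth 0 s).
Proof.
elim: s => [|x s IH] /= s_sorted [|i] /=; rewrite ?nth_nil //.
  by case: s s_sorted {IH} => //= y s /andP [].
exact/IH/(path_sorted s_sorted).
Qed.

Lemma nth_le_head (s : seq nat) i : sorted geq s -> nth 0 s i <= head 0 s.
Proof. by move/sorted_nonincreasing/nonincreasing_le => le_nth; rewrite -nth0 le_nth. Qed.

Fixpoint partition_of (F : nat -> nat) (B : nat) : seq nat :=
  if B is B'.+1 then
    if 0 < F 0 then F 0 :: partition_of (fun i => F i.+1) B' else [::]
  else [::].

Lemma size_partition_of F B : size (partition_of F B) <= B.
Proof. by elim: B F => [|B IH] F //=; case: ifP => //= _; apply: IH. Qed.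

Lemma all_pos_partition_of F B : all (fun a => 0 < a) (partition_of F B).
Proof. by elim: B F => [|B IH] F //=; case: ifP => //= ->; apply: IH. Qed.

Lemma sorted_partition_of F B : nonincreasing F -> sorted geq (partition_of F B).
Proof.
suff path_of B' G x : nonincreasing G -> G 0 <= x -> path geq x (partition_of G B').
  by case: B => [|B] //= F_dec; case: ifP => //= _; apply: path_of.
elim: B' G x => [|B' IH] G x //= G_dec le_G0x; case: ifP => //= _.
by rewrite le_G0x; apply: IH => // i; apply: G_dec.
Qed.

Lemma partition_of_is_partition F B : nonincreasing F ->
  is_partition (sumn (partition_of F B)) (partition_of F B).
Proof.
by move=> F_dec; rewrite /is_partition sorted_partition_of ?all_pos_partition_of ?eqxx.
Qed.

Lemma nth_partition_of F B : nonincreasing F -> (forall i, B <= i -> F i = 0) ->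
  nth 0 (partition_of F B) =1 F.
Proof.
elim: B F => [|B IH] F F_dec F0 i /=; first by rewrite nth_nil F0.
case: ifP => [_ | F0_not_pos]; last first.
  by have := nonincreasing_le F_dec (leq0n i); rewrite nth_nil; lia.
by case: i => [|i] //=; apply: IH => [k|k le_Bk]; [apply: F_dec | apply: F0].
Qed.

Lemma sumn_partition_of F B : nonincreasing F -> (forall i, B <= i -> F i = 0) ->
  sumn (partition_of F B) = \sum_(0 <= i < B) F i.
Proof.
move=> F_dec F0; rewrite (sumn_nth (size_partition_of F B)).
by apply: eq_bigr => i _; rewrite nth_partition_of.
Qed.

Lemma eq_from_nth_pos (s t : seq nat) :
  all (fun a => 0 < a) s -> all (fun a => 0 < a) t -> nth 0 s =1 nth 0 t -> s = t.
Proof.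
move=> s_pos t_pos eq_st; apply: (eq_from_nth (x0 := 0)) => [|i _]; last exact: eq_st.
have size_le u v : all (fun a => 0 < a) u -> nth 0 u =1 nth 0 v -> size u <= size v.
  move=> u_pos eq_uv; rewrite leqNgt; apply/negP => lt_vu.
  by move/all_nthP: u_pos => /(_ 0 _ lt_vu); rewrite eq_uv nth_default.
by apply/eqP; rewrite eqn_leq !size_le.
Qed.

Definition conjugate (s : seq nat) : seq nat :=
  partition_of (fun t => count (fun a => t < a) s) (head 0 s).

Lemma count_gt_nonincreasing (s : seq nat) : nonincreasing (fun t => count (fun a => t < a) s).
Proof. by move=> t; apply: sub_count => a /=; lia. Qed.

Lemma count_gt_nth (s : seq nat) t i : sorted geq s ->
  (i < count (fun a => t < a) s) = (t < nth 0 s i).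
Proof.
elim: s i => [|x s IH] i s_sorted /=; first by rewrite nth_nil.
have s'_sorted : sorted geq s := path_sorted s_sorted.
case: (ltnP t x) => [lt_tx | le_xt] /=; first by case: i => [|i] //=; rewrite add1n ltnS IH.
have -> : count (fun a => t < a) s = 0.
  apply/eqP; rewrite -leqn0 leqNgt -has_count; apply/hasP => [[a a_s lt_ta]].
  have geq_trans : transitive geq by move=> ? ? ? /= h1 h2; apply: leq_trans h2 h1.
  by have /allP/(_ a a_s) /= := order_path_min geq_trans s_sorted; lia.
by have := nth_le_head i s_sorted; rewrite /=; lia.
Qed.

Lemma nth_conjugate (s : seq nat) : sorted geq s ->
  nth 0 (conjugate s) =1 fun t => count (fun a => t < a) s.
Proof.
move=> s_sorted; apply: nth_partition_of => [|i le_hi]; first exact: count_gt_nonincreasing.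
by apply/eqP; rewrite -leqn0 leqNgt count_gt_nth // nth0 -leqNgt.
Qed.

Lemma count_partition_of (P : pred nat) F B : ~~ P 0 -> nonincreasing F ->
  count P (partition_of F B) = \sum_(0 <= t < B) P (F t).
Proof.
elim: B F => [|B IH] F NP0 F_dec /=; first by rewrite big_geq.
case: ifP => F0_pos /=.
  by rewrite big_nat_recl // IH // => i; apply: F_dec.
have F_0 i : F i = 0 by have := nonincreasing_le F_dec (leq0n i); lia.
by rewrite big1 // => t _; rewrite F_0 (negbTE NP0).
Qed.

Lemma conjugateK (s : seq nat) : sorted geq s -> all (fun a => 0 < a) s ->
  conjugate (conjugate s) = s.
Proof.
move=> s_sorted s_pos; apply: eq_from_nth_pos => //; first exact: all_pos_partition_of.
move=> i; rewrite nth_conjugate; last exact/sorted_partition_of/count_gt_nonincreasing.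
rewrite count_partition_of //; last exact: count_gt_nonincreasing.
under eq_bigr do rewrite count_gt_nth //.
by rewrite sum_nat_lt; have := nth_le_head i s_sorted; lia.
Qed.

Lemma sumn_conjugate (s : seq nat) : sorted geq s -> sumn (conjugate s) = sumn s.
Proof.
move=> s_sorted; rewrite sumn_partition_of; first last.
- move=> i le_hi; rewrite -(nth_conjugate s_sorted) nth_default //.
  exact: leq_trans (size_partition_of _ _) le_hi.
- exact: count_gt_nonincreasing.
have: all (fun a => a <= head 0 s) s.
  by apply/allP => a a_s; rewrite -(nth_index 0 a_s) nth_le_head.
elim: (s) (head 0 s) => [|x s' IH] H /=; first by rewrite big1.
move=> /andP [le_xH le_s'H]; rewrite big_split /= sum_nat_lt IH //; lia.
Qed.

Lemma head_conjugate (s : seq nat) : sorted geq s -> all (fun a => 0 < a) s ->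
  head 0 (conjugate s) = size s.
Proof. by move=> s_sorted s_pos; rewrite -nth0 nth_conjugate //; apply/eqP; rewrite -all_count. Qed.

Lemma size_conjugate_leq (s : seq nat) k : sorted geq s -> all (fun a => 0 < a) s ->
  (size (conjugate s) <= k) = (head 0 s <= k).
Proof.
move=> s_sorted s_pos.
have size_leq u : all (fun a => 0 < a) u -> (size u <= k) = (nth 0 u k == 0).
  move=> u_pos; case: (leqP (size u) k) => [le_uk | lt_ku]; first by rewrite nth_default.
  by move/all_nthP: u_pos => /(_ 0 k lt_ku); case: (nth 0 u k).
rewrite size_leq ?all_pos_partition_of // nth_conjugate // -leqn0 leqNgt.
by rewrite count_gt_nth // nth0 -leqNgt.
Qed.

Lemma is_partition_conjugate N s : is_partition N s -> is_partition N (conjugate s).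
Proof.
case/and3P => s_sorted s_pos /eqP <-; rewrite -(sumn_conjugate s_sorted).
exact/partition_of_is_partition/count_gt_nonincreasing.
Qed.

Lemma size_le_sumn (s : seq nat) : all (fun a => 0 < a) s -> size s <= sumn s.
Proof. by elim: s => //= x s IH /andP [x_pos /IH]; lia. Qed.

Lemma mem_seqs_len m k s :
  (s \in seqs_len m k) = (size s == k) && all (fun a => 0 < a <= m) s.
Proof.
elim: k s => [|k IH] s /=; first by case: s.
apply/allpairsPdep/idP => [[a [t [a_iota t_seqs ->]]] | ].
  by move: a_iota t_seqs; rewrite mem_iota IH /= => ? /andP [/eqP -> ->]; rewrite eqxx andbT; lia.
case: s => [|a t] //= /andP [/eqP [] size_t /andP [a_bound t_bound]].
by exists a, t; rewrite mem_iota IH size_t eqxx t_bound; split => //; lia.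
Qed.

Lemma uniq_seqs_len m k : uniq (seqs_len m k).
Proof.
elim: k => [|k IH] //=; apply: allpairs_uniq_dep => //; first exact: iota_uniq.
by move=> [a t] [b u] _ _ /= [-> ->].
Qed.

Lemma mem_candidates n s :
  (s \in candidates n) = (size s <= n) && all (fun a => 0 < a <= n) s.
Proof.
apply/flattenP/idP => [[l /mapP [k k_iota ->]] | /andP [le_sn s_bound]].
  by rewrite mem_seqs_len mem_iota in k_iota * => /andP [/eqP -> ->]; rewrite andbT; lia.
exists (seqs_len n (size s)); last by rewrite mem_seqs_len eqxx.
by apply/mapP; exists (size s); rewrite // mem_iota; lia.
Qed.

Lemma flatten_uniq (T U : eqType) (F : T -> seq U) (key : U -> T) (s : seq T) :
  uniq s -> (forall x, uniq (F x)) -> (forall x y, y \in F x -> key y = x) ->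
  uniq (flatten (map F s)).
Proof.
move=> s_uniq F_uniq keyF; elim: s s_uniq => [|x s IH] //= /andP [x_s s_uniq].
rewrite cat_uniq F_uniq IH // andbT; apply/hasP => [[y /flattenP [_ /mapP [x' x's ->]] yFx' yFx]].
by move: x_s; rewrite -(keyF _ _ yFx) (keyF _ _ yFx') x's.
Qed.

Lemma uniq_candidates n : uniq (candidates n).
Proof.
apply: (flatten_uniq (key := size)); [exact: iota_uniq | exact: uniq_seqs_len |].
by move=> k t; rewrite mem_seqs_len => /andP [/eqP].
Qed.

Lemma mem_partitions n s : (s \in partitions n) = is_partition n s.
Proof.
rewrite mem_filter mem_candidates andb_idr // => /and3P [_ s_pos /eqP <-].
rewrite size_le_sumn //=; apply/allP => a a_s; move/allP/(_ a a_s): s_pos => -> /=.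
by rewrite sumnE (big_rem a a_s) leq_addr.
Qed.

Lemma uniq_partitions n : uniq (partitions n).
Proof. exact/filter_uniq/uniq_candidates. Qed.

Lemma eq_size_bij_in (T U : eqType) (A : seq T) (B : seq U) (f : T -> U) (h : U -> T) :
  uniq A -> uniq B -> {in A, forall x, f x \in B} -> {in B, forall y, h y \in A} ->
  {in A, cancel f h} -> {in B, cancel h f} -> size A = size B.
Proof.
move=> A_uniq B_uniq fAB hBA fK hK; rewrite -(size_map f); apply/perm_size/uniq_perm => //.
  by rewrite map_inj_in_uniq // => x y x_A y_A /(congr1 h); rewrite !fK.
move=> y; apply/mapP/idP => [[x x_A ->] | y_B]; first exact: fAB.
by exists (h y); rewrite ?hK ?hBA.
Qed.

Lemma pk_head_leq N k : pk N k = count (fun s => head 0 s <= k) (partitions N).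
Proof.
rewrite /pk -!size_filter; apply: (eq_size_bij_in (f := conjugate) (h := conjugate)).
all: try exact/filter_uniq/uniq_partitions.
all: move=> s; rewrite !(mem_filter _ _ (partitions N)) !mem_partitions.
all: move=> /andP [le_k s_part]; have /and3P [s_sorted s_pos _] := s_part.
- by rewrite head_conjugate // le_k is_partition_conjugate.
- by rewrite size_conjugate_leq // le_k is_partition_conjugate.
- exact: conjugateK.
- exact: conjugateK.
Qed.

Lemma eq_from_adjacent_sums (G H : nat -> nat) B :
  (forall i, G i + G i.+1 = H i + H i.+1) ->
  (forall i, B <= i -> G i = 0) -> (forall i, B <= i -> H i = 0) -> G =1 H.
Proof.
move=> eq_sums G0 H0.
suff eq_above k i : B - i <= k -> G i = H i by move=> i; apply: (eq_above (B - i)).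
elim: k i => [|k IH] i le_k; first by rewrite G0 ?H0 //; lia.
by have := IH i.+1 ltac:(lia); have := eq_sums i; lia.
Qed.

Fixpoint altsum (s : seq nat) : nat := if s is x :: t then x - altsum t else 0.

Definition alt_tail (s : seq nat) (i : nat) : nat := altsum (drop i s).

Lemma alt_tail_vanishing (s : seq nat) i : size s <= i -> alt_tail s i = 0.
Proof. by move=> le_si; rewrite /alt_tail drop_oversize. Qed.

Lemma alt_tail_adjacent (s : seq nat) i : sorted geq s ->
  alt_tail s i + alt_tail s i.+1 = nth 0 s i.
Proof.
move=> s_sorted; case: (ltnP i (size s)) => [lt_is | le_si]; last first.
  by rewrite !alt_tail_vanishing ?nth_default // (leq_trans le_si).
rewrite /alt_tail (drop_nth 0 lt_is) /= subnK //.
have altsum_le u : altsum u <= head 0 u by case: u => //= x t; apply: leq_subr.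
apply: leq_trans (altsum_le _) _; rewrite -nth0 nth_drop addn0.
exact: sorted_nonincreasing.
Qed.

Lemma alt_tail_nonincreasing2 (s : seq nat) i : sorted geq s ->
  alt_tail s i.+2 <= alt_tail s i.
Proof.
move=> s_sorted; have := alt_tail_adjacent i s_sorted.
have := alt_tail_adjacent i.+1 s_sorted; have := sorted_nonincreasing s_sorted i; lia.
Qed.

Lemma sumn_alt_tail (l : seq nat) N : sorted geq l -> size l <= N ->
  sumn l = alt_tail l 0 + 2 * \sum_(0 <= i < N) alt_tail l i.+1.
Proof.
move=> l_sorted le_lN; rewrite (sumn_nth le_lN) -sum_nat_adjacent ?alt_tail_vanishing //.
by apply: eq_bigr => i _; rewrite alt_tail_adjacent.
Qed.

Lemma evsum_alt_tail (l : seq nat) N : sorted geq l -> size l <= N ->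
  evsum l = \sum_(0 <= i < N) alt_tail l i.+1.
Proof.
move=> l_sorted le_lN; have le_N_N2 : N <= N.*2 by rewrite -addnn leq_addr.
rewrite (evsum_nth (leq_trans le_lN le_N_N2)).
rewrite -(sum_nat_vanishing (F := fun i => alt_tail l i.+1) le_N_N2) => [|i le_Ni].
  by rewrite sum_nat_double; apply: eq_bigr => t _; rewrite alt_tail_adjacent.
by apply: alt_tail_vanishing; lia.
Qed.

(* The sequence c, a_0, b_0, a_1, b_1, ... padded with zeros. *)
Definition interleave (c : nat) (a b : seq nat) (i : nat) : nat :=
  if i is i'.+1 then nth 0 (if odd i' then b else a) i'./2 else c.

Lemma interleave_odd c a b t : interleave c a b t.*2.+1 = nth 0 a t.
Proof. by rewrite /= odd_double doubleK. Qed.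

Lemma interleave_even c a b t : interleave c a b t.*2.+2 = nth 0 b t.
Proof. by rewrite /= odd_double uphalf_double. Qed.

Lemma interleave_unique c a b (H : nat -> nat) : H 0 = c ->
  (forall t, H t.*2.+1 = nth 0 a t) -> (forall t, H t.*2.+2 = nth 0 b t) ->
  interleave c a b =1 H.
Proof.
move=> H0 H_odd H_even [|i] //=; rewrite -[in RHS](odd_double_half i).
by case: (odd i); rewrite ?add1n ?add0n ?H_odd ?H_even.
Qed.

Lemma interleave_nonincreasing2 c (a b : seq nat) : sorted geq a -> sorted geq b ->
  head 0 b <= c -> forall i, interleave c a b i.+2 <= interleave c a b i.
Proof.
move=> a_sorted b_sorted le_bc [|i] /=; first by rewrite nth0.
by rewrite negbK; case: (odd i); apply: sorted_nonincreasing.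
Qed.

Lemma interleave_vanishing c (a b : seq nat) K : size a <= K -> size b <= K ->
  forall i, K.*2.+1 <= i -> interleave c a b i = 0.
Proof.
move=> le_aK le_bK [|i] //=; rewrite ltnS -{1}(odd_double_half i) => le_i.
by rewrite nth_default //; case: (odd i) le_i; rewrite ?le_aK ?le_bK //=; lia.
Qed.

Definition split_partition (n : nat) (l : seq nat) : seq nat * seq nat :=
  (partition_of (fun t => alt_tail l t.*2.+1) n, partition_of (fun t => alt_tail l t.*2.+2) n).

Definition merge_partitions (n c : nat) (ab : seq nat * seq nat) : seq nat :=
  partition_of (fun i => interleave c ab.1 ab.2 i + interleave c ab.1 ab.2 i.+1) n.+1.

Definition evsum_partition (n j : nat) (l : seq nat) : bool :=
  is_partition n l && (evsum l == j).

Definition bounded_pair (j c : nat) (ab : seq nat * seq nat) : bool :=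
  [&& is_partition (sumn ab.1) ab.1, is_partition (sumn ab.2) ab.2,
      sumn ab.1 + sumn ab.2 == j & head 0 ab.2 <= c].

Lemma nth_split_partition n (l : seq nat) : sorted geq l -> size l <= n.+1 ->
  nth 0 (split_partition n l).1 =1 (fun t => alt_tail l t.*2.+1) /\
  nth 0 (split_partition n l).2 =1 (fun t => alt_tail l t.*2.+2).
Proof.
move=> l_sorted le_ln; split; apply: nth_partition_of => i.
- by rewrite doubleS alt_tail_nonincreasing2.
- by move=> le_ni; apply: alt_tail_vanishing; rewrite -addnn; lia.
- by rewrite doubleS alt_tail_nonincreasing2.
- by move=> le_ni; apply: alt_tail_vanishing; rewrite -addnn; lia.
Qed.

Section Bijection.

Variables n j : nat.
Hypothesis le_2j_n : 2 * j <= n.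
Local Notation c := (n - 2 * j).

Lemma split_partition_bounded l : evsum_partition n j l -> bounded_pair j c (split_partition n l).
Proof.
case/andP => /and3P [l_sorted l_pos /eqP sum_l] /eqP evsum_l.
have le_ln : size l <= n by rewrite -sum_l size_le_sumn.
have [nth1 nth2] := nth_split_partition l_sorted (leqW le_ln).
have dec1 : nonincreasing (fun t => alt_tail l t.*2.+1).
  by move=> t; rewrite doubleS alt_tail_nonincreasing2.
have dec2 : nonincreasing (fun t => alt_tail l t.*2.+2).
  by move=> t; rewrite doubleS alt_tail_nonincreasing2.
rewrite /bounded_pair !partition_of_is_partition //=; apply/andP; split.
  rewrite !(sumn_nth (size_partition_of _ n)) -big_split /=.
  under eq_bigr do rewrite nth1 nth2.
  rewrite -(sum_nat_double (fun i => alt_tail l i.+1)) -(evsum_alt_tail l_sorted) ?evsum_l //.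
  by rewrite -addnn; lia.
rewrite -nth0 nth2 double0; have := alt_tail_adjacent 0 l_sorted.
have := alt_tail_adjacent 1 l_sorted; have := sorted_nonincreasing l_sorted 0.
have := sumn_alt_tail l_sorted le_ln; rewrite -(evsum_alt_tail l_sorted le_ln); lia.
Qed.

Section Merge.

Variables a b : seq nat.
Hypothesis ab_bounded : bounded_pair j c (a, b).
Local Notation G := (interleave c a b).

Let a_part : is_partition (sumn a) a. Proof. by case/and4P: ab_bounded. Qed.
Let b_part : is_partition (sumn b) b. Proof. by case/and4P: ab_bounded. Qed.
Let sum_ab : sumn a + sumn b = j. Proof. by case/and4P: ab_bounded => _ _ /eqP. Qed.

Let size_a : size a <= j.
Proof. by case/and3P: a_part => _ /size_le_sumn; lia. Qed.

Let size_b : size b <= j.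
Proof. by case/and3P: b_part => _ /size_le_sumn; lia. Qed.

Lemma interleave_bounded_vanishing i : n.+1 <= i -> G i = 0.
Proof. by move=> le_ni; apply: (interleave_vanishing _ size_a size_b); rewrite -addnn; lia. Qed.

Lemma interleave_adjacent_nonincreasing : nonincreasing (fun i => G i + G i.+1).
Proof.
case/and4P: ab_bounded => /and3P [a_sorted _ _] /and3P [b_sorted _ _] _ le_bc i.
by rewrite addnC leq_add2r interleave_nonincreasing2.
Qed.

Lemma nth_merge_partitions : nth 0 (merge_partitions n c (a, b)) =1 fun i => G i + G i.+1.
Proof.
apply: nth_partition_of => [|i le_ni]; first exact: interleave_adjacent_nonincreasing.
by rewrite !interleave_bounded_vanishing //; lia.
Qed.

Lemma sum_interleave N : j.*2 <= N -> \sum_(0 <= i < N) G i.+1 = j.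
Proof.
move=> le_jN; rewrite (sum_nat_vanishing le_jN) => [|i le_ji]; last first.
  by apply: (interleave_vanishing _ size_a size_b).
rewrite (sum_nat_double (fun i => G i.+1)) -[X in _ = X]sum_ab.
rewrite (sumn_nth size_a) (sumn_nth size_b) -big_split.
by apply: eq_bigr => t _; rewrite interleave_odd interleave_even.
Qed.

Lemma merge_partitions_evsum : evsum_partition n j (merge_partitions n c (a, b)).
Proof.
set l := merge_partitions n c (a, b).
have le_ln : size l <= n.+1 by apply: size_partition_of.
apply/andP; split; first (apply/and3P; split).
- exact/sorted_partition_of/interleave_adjacent_nonincreasing.
- exact: all_pos_partition_of.
- rewrite (sumn_nth le_ln); under eq_bigr do rewrite nth_merge_partitions.
  rewrite sum_nat_adjacent ?(interleave_bounded_vanishing (leqnn _)) // sum_interleave /=; last lia.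
  by rewrite subnK.
rewrite (evsum_nth (M := n.+1)); last by rewrite -addnn; lia.
under eq_bigr do rewrite nth_merge_partitions.
by rewrite -(sum_nat_double (fun i => G i.+1)) sum_interleave // -!addnn; lia.
Qed.

Lemma split_merge_partitions : split_partition n (merge_partitions n c (a, b)) = (a, b).
Proof.
set l := merge_partitions n c (a, b).
have /andP [/and3P [l_sorted _ _] _] := merge_partitions_evsum.
have alt_tail_l : alt_tail l =1 G.
  apply: (eq_from_adjacent_sums (B := n.+1)) => [i | i le_ni | i le_ni].
  - by rewrite alt_tail_adjacent // nth_merge_partitions.
  - by apply: alt_tail_vanishing; rewrite (leq_trans (size_partition_of _ _)).
  - exact: interleave_bounded_vanishing.
have [nth1 nth2] := nth_split_partition l_sorted (size_partition_of _ _).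
case/and3P: a_part => _ a_pos _; case/and3P: b_part => _ b_pos _.
congr (_, _); apply: eq_from_nth_pos; rewrite ?all_pos_partition_of // => t.
- by rewrite nth1 alt_tail_l interleave_odd.
- by rewrite nth2 alt_tail_l interleave_even.
Qed.

End Merge.

Lemma merge_split_partition l : evsum_partition n j l ->
  merge_partitions n c (split_partition n l) = l.
Proof.
move=> l_ev; have := split_partition_bounded l_ev.
case/andP: l_ev => /and3P [l_sorted l_pos /eqP sum_l] /eqP evsum_l.
have le_ln : size l <= n by rewrite -sum_l size_le_sumn.
have [nth1 nth2] := nth_split_partition l_sorted (leqW le_ln).
case: (split_partition n l) nth1 nth2 => [a b] /= nth1 nth2 ab_bounded.
have interleave_l : interleave c a b =1 alt_tail l.
  apply: interleave_unique => [|t|t]; rewrite ?nth1 ?nth2 //.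
  have := sumn_alt_tail l_sorted le_ln; rewrite -(evsum_alt_tail l_sorted le_ln); lia.
apply: eq_from_nth_pos => // [|i]; first exact: all_pos_partition_of.
by rewrite nth_merge_partitions // !interleave_l alt_tail_adjacent.
Qed.

End Bijection.

Lemma mem_evsum_partitions n j l :
  (l \in [seq s <- partitions n | evsum s == j]) = evsum_partition n j l.
Proof. by rewrite (mem_filter _ _ (partitions n)) mem_partitions andbC. Qed.

Definition bounded_pairs (j c : nat) : seq (seq nat * seq nat) :=
  flatten [seq [seq (a, b) | a <- partitions i, b <- [seq b <- partitions (j - i) | head 0 b <= c]]
          | i <- iota 0 j.+1].

Lemma size_bounded_pairs j c :
  size (bounded_pairs j c) = \sum_(0 <= i < j.+1) p i * pk (j - i) c.
Proof.
rewrite size_flatten /shape -map_comp sumnE big_map.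
by apply: eq_bigr => i _; rewrite /= size_allpairs size_filter pk_head_leq.
Qed.

Lemma mem_bounded_pairs j c ab : (ab \in bounded_pairs j c) = bounded_pair j c ab.
Proof.
apply/flattenP/idP => [[_ /mapP [i i_iota ->]] | ].
  case/allpairsP => [[a b] [/= a_part b_filter ->]].
  move: i_iota a_part b_filter.
  rewrite mem_iota (mem_filter _ _ (partitions (j - i))) !mem_partitions.
  move=> i_le /and3P [a_sorted a_pos /eqP sum_a] /andP [le_bc /and3P [b_sorted b_pos /eqP sum_b]].
  by rewrite /bounded_pair /is_partition a_sorted a_pos b_sorted b_pos le_bc !eqxx /=; lia.
case: ab => a b /and4P [a_part b_part /eqP sum_ab le_bc].
rewrite /= in a_part b_part sum_ab le_bc.
exists [seq (a', b') | a' <- partitions (sumn a),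
                       b' <- [seq b' <- partitions (j - sumn a) | head 0 b' <= c]].
  by apply/mapP; exists (sumn a); rewrite // mem_iota; lia.
apply/allpairsP; exists (a, b).
rewrite (mem_filter _ _ (partitions _)) !mem_partitions le_bc a_part /=.
by have -> : j - sumn a = sumn b by lia.
Qed.

Lemma uniq_bounded_pairs j c : uniq (bounded_pairs j c).
Proof.
apply: (flatten_uniq (key := fun ab => sumn ab.1)); first exact: iota_uniq.
  move=> i; apply: allpairs_uniq => [||[a b] [a' b'] _ _ [-> ->]] //.
    exact: uniq_partitions.
  exact/filter_uniq/uniq_partitions.
move=> i [a b] /allpairsP [[a' b'] [/= a_part _ [-> _]]].
by move: a_part; rewrite mem_partitions => /and3P [_ _ /eqP].
Qed.

Theorem mainTheorem2 (n j : nat) :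
  2 * j <= n ->
  f n j = \sum_(0 <= i < j.+1) p i * pk (j - i) (n - 2 * j).
Proof.
move=> le_2j_n; rewrite -size_bounded_pairs /f -size_filter.
apply: (eq_size_bij_in (f := split_partition n) (h := merge_partitions n (n - 2 * j))).
- exact/filter_uniq/uniq_partitions.
- exact: uniq_bounded_pairs.
- by move=> l; rewrite mem_evsum_partitions mem_bounded_pairs; apply: split_partition_bounded.
- by move=> [a b]; rewrite mem_evsum_partitions mem_bounded_pairs; apply: merge_partitions_evsum.
- by move=> l; rewrite mem_evsum_partitions; apply: merge_split_partition.
- by move=> [a b]; rewrite mem_bounded_pairs; apply: split_merge_partitions.
Qed.
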